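(* Let $T:[0,1)\to[0,1)$ be an interval exchange transformation and let $f:[0,1)\to\mathbb{R}$ be a function of bounded variation. Let $\{T^i\Delta:0\le i<q\}$ be a Rokhlin tower of intervals (i.e. $\Delta$ is an interval and $T^i\Delta$, $0\le i<q$, are pairwise disjoint intervals). Then there exists $a\in\mathbb{R}$ such that \[|f^{(q)}(x)-a|\le \mathrm{Var}_{[0,1)}f\quad\text{and}\quad |f^{(2q)}(x)-2a|\le 2\,\mathrm{Var}_{[0,1)}f\] for all $x\in\bigcup_{i=0}^{q-1}T^i(\Delta\cap T^{-q}\Delta\cap T^{-2q}\Delta)$.
   Context: An interval exchange transformation is a bijection of $[0,1)$ which splits $[0,1)$ into finitely many intervals and rearranges them by translations. $f^{(n)}=\sum_{i=0}^{n-1}f\circ T^i$. $\mathrm{Var}_{[0,1)}f$ is the total variation of $f$. *)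

From Stdlib Require Import Reals.
From Coquelicot Require Import Coquelicot.
Open Scope R_scope.

Fixpoint sumR (n : nat) (g : nat -> R) : R :=
  match n with O => 0 | S m => sumR m g + g m end.

Fixpoint iterT (T : R -> R) (n : nat) (x : R) : R :=
  match n with O => x | S m => T (iterT T m x) end.

Definition in01 (x : R) : Prop := 0 <= x < 1.

Definition is_IET (T : R -> R) : Prop :=
  (exists (d : nat) (a c : nat -> R),
      (0 < d)%nat /\ a O = 0 /\ a d = 1 /\
      (forall k, (k < d)%nat -> a k < a (S k)) /\
      (forall k x, (k < d)%nat -> a k <= x < a (S k) -> T x = x + c k)) /\
  (forall x, in01 x -> in01 (T x)) /\
  (forall x y, in01 x -> in01 y -> T x = T y -> x = y) /\
  (forall y, in01 y -> exists x, in01 x /\ T x = y).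

Definition birkhoff (T f : R -> R) (n : nat) (x : R) : R :=
  sumR n (fun i => f (iterT T i x)).

Definition var_sums (f : R -> R) (v : R) : Prop :=
  exists (n : nat) (x : nat -> R),
    (forall i, (i <= n)%nat -> in01 (x i)) /\
    (forall i, (i < n)%nat -> x i < x (S i)) /\
    v = sumR n (fun i => Rabs (f (x (S i)) - f (x i))).

Definition BV01 (f : R -> R) : Prop :=
  exists M, forall v, var_sums f v -> v <= M.

Definition Var01 (f : R -> R) : R := real (Lub_Rbar (var_sums f)).

Definition is_interval (S : R -> Prop) : Prop :=
  forall x y z, S x -> S z -> x <= y <= z -> S y.

Definition imageT (T : R -> R) (i : nat) (S : R -> Prop) : R -> Prop :=
  fun y => exists x, S x /\ y = iterT T i x.

Definition rokhlin_tower (T : R -> R) (Delta : R -> Prop) (q : nat) : Prop :=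
  (forall x, Delta x -> in01 x) /\ is_interval Delta /\
  (forall i, (i < q)%nat -> is_interval (imageT T i Delta)) /\
  (forall i j y, (i < q)%nat -> (j < q)%nat -> i <> j ->
      imageT T i Delta y -> imageT T j Delta y -> False).

(* For a point x = T^i y of the tower with y and T^q y in Delta, the orbit segment
   x, T x, ..., T^(q-1) x visits every level T^k Delta exactly once.  Hence for two
   such points the difference of their Birkhoff sums of length q is a sum of
   increments of f over pairs of points lying in pairwise disjoint intervals, which
   is at most Var f.  Taking a = f^(q)(x0) for one such point x0 gives the first
   bound, and the second follows from f^(2q)(x) = f^(q)(x) + f^(q)(T^q x), since
   T^q x is again such a point when T^(2q) y is in Delta as well. *)
From Stdlib Require Import Reals.
From Coquelicot Require Import Coquelicot.
From Stdlib Require Import Lra Lia Classical.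
Open Scope R_scope.

Lemma sumR_ext n g h :
  (forall k, (k < n)%nat -> g k = h k) -> sumR n g = sumR n h.
Proof.
  induction n as [|n IH]; intros H; simpl; auto.
  rewrite IH by (intros; apply H; lia). rewrite H by lia. reflexivity.
Qed.

Lemma sumR_add a b g :
  sumR (a + b) g = sumR a g + sumR b (fun j => g (a + j)%nat).
Proof.
  induction b as [|b IH]; simpl.
  - rewrite Nat.add_0_r. ring.
  - rewrite Nat.add_succ_r. simpl. rewrite IH. ring.
Qed.

Lemma sumR_minus n g h :
  sumR n (fun k => g k - h k) = sumR n g - sumR n h.
Proof. induction n as [|n IH]; simpl; [ring | rewrite IH; ring]. Qed.

Lemma Rabs_sumR_le n g : Rabs (sumR n g) <= sumR n (fun k => Rabs (g k)).
Proof.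
  induction n as [|n IH]; simpl.
  - rewrite Rabs_R0. lra.
  - eapply Rle_trans; [apply Rabs_triang | lra].
Qed.

Lemma sumR_skip n k0 g : (k0 <= n)%nat ->
  sumR (S n) g =
  sumR n (fun k => g (if (k <? k0)%nat then k else S k)) + g k0.
Proof.
  revert k0; induction n as [|n IH]; intros k0 Hk0.
  - replace k0 with 0%nat by lia. simpl. ring.
  - change (sumR (S (S n)) g) with (sumR (S n) g + g (S n)).
    destruct (Nat.eq_dec k0 (S n)) as [->|Hne].
    + f_equal. apply sumR_ext. intros k Hk.
      destruct (Nat.ltb_spec k (S n)); [reflexivity | lia].
    + rewrite (IH k0) by lia. simpl.
      destruct (Nat.ltb_spec n k0); [lia | ring].
Qed.

Lemma exists_argmax n (u : nat -> R) :
  exists k0, (k0 <= n)%nat /\ forall k, (k <= n)%nat -> u k <= u k0.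
Proof.
  induction n as [|n [k0 [Hk0 Hmax]]].
  - exists 0%nat. split; [lia|]. intros k Hk. replace k with 0%nat by lia. lra.
  - destruct (Rle_dec (u k0) (u (S n))).
    + exists (S n). split; [lia|]. intros k Hk.
      destruct (Nat.eq_dec k (S n)) as [->|]; [lra|].
      specialize (Hmax k ltac:(lia)). lra.
    + exists k0. split; [lia|]. intros k Hk.
      destruct (Nat.eq_dec k (S n)) as [->|]; [lra|]. apply Hmax. lia.
Qed.

Lemma iterT_add T m n x : iterT T (m + n) x = iterT T m (iterT T n x).
Proof. induction m as [|m IH]; simpl; congruence. Qed.

Lemma iterT_in01 T n x :
  (forall x, in01 x -> in01 (T x)) -> in01 x -> in01 (iterT T n x).
Proof. intros HT. induction n; simpl; auto. Qed.

Definition partition01 (N : nat) (x : nat -> R) : Prop :=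
  (forall i, (i <= N)%nat -> in01 (x i)) /\
  (forall i, (i < N)%nat -> x i < x (S i)).

Definition variation_sum (f : R -> R) (N : nat) (x : nat -> R) : R :=
  sumR N (fun i => Rabs (f (x (S i)) - f (x i))).

Lemma variation_sum_le_Var01 f N x :
  BV01 f -> partition01 N x -> variation_sum f N x <= Var01 f.
Proof.
  intros [M HM] [Hin Hincr].
  assert (Hv : var_sums f (variation_sum f N x)) by (exists N, x; auto).
  unfold Var01. destruct (Lub_Rbar_correct (var_sums f)) as [Hub Hlub].
  specialize (Hub _ Hv).
  assert (HleM : Rbar_le (Lub_Rbar (var_sums f)) M) by (apply Hlub; exact HM).
  destruct (Lub_Rbar (var_sums f)); simpl in *; tauto.
Qed.

Lemma partition01_extend f N x p :
  partition01 N x -> in01 p -> x N <= p ->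
  exists N' x', partition01 N' x' /\ x' N' = p /\
    variation_sum f N x + Rabs (f p - f (x N)) <= variation_sum f N' x'.
Proof.
  intros [Hin Hincr] Hp Hle.
  destruct (Rle_lt_or_eq_dec _ _ Hle) as [Hlt|<-].
  - exists (S N), (fun i => if (i <=? N)%nat then x i else p).
    split; [split|split].
    + intros i Hi. destruct (Nat.leb_spec i N); auto.
    + intros i Hi. destruct (Nat.leb_spec i N), (Nat.leb_spec (S i) N); try lia.
      * apply Hincr. lia.
      * replace i with N by lia. exact Hlt.
    + destruct (Nat.leb_spec (S N) N); [lia | reflexivity].
    + unfold variation_sum. cbn [sumR]. rewrite Nat.leb_refl.
      destruct (Nat.leb_spec (S N) N); [lia|].
      apply Rplus_le_compat_r, Req_le, sumR_ext. intros k Hk.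
      destruct (Nat.leb_spec (S k) N), (Nat.leb_spec k N); try lia. reflexivity.
  - exists N, x. split; [split; assumption | split; [reflexivity|]].
    rewrite Rminus_diag, Rabs_R0. lra.
Qed.

(* Induction on the number of pairs, removing the pair with the largest left end:
   the partition built for the other pairs ends below it and is extended by it. *)
Lemma separated_increments_le_variation_sum f : forall n (u v : nat -> R),
  (forall k, (k < n)%nat -> 0 <= u k /\ u k <= v k /\ v k < 1) ->
  (forall j k, (j < n)%nat -> (k < n)%nat -> j <> k -> v j < u k \/ v k < u j) ->
  exists N x, partition01 N x /\
    (forall w, 0 <= w -> (forall k, (k < n)%nat -> v k <= w) -> x N <= w) /\
    sumR n (fun k => Rabs (f (v k) - f (u k))) <= variation_sum f N x.
Proof.
  induction n as [|n IH]; intros u v Huv Hsep.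
  - exists 0%nat, (fun _ => 0). repeat split; try lra; try lia.
    + intros w Hw _. exact Hw.
    + unfold variation_sum. simpl. lra.
  - destruct (exists_argmax n u) as [k0 [Hk0 Hmax]].
    set (s := fun k => if (k <? k0)%nat then k else S k).
    assert (Hs : forall k, (k < n)%nat -> (s k < S n)%nat /\ s k <> k0).
    { intros k Hk. unfold s. destruct (Nat.ltb_spec k k0); lia. }
    destruct (IH (fun k => u (s k)) (fun k => v (s k))) as [N [x [Hx [Hend Hsum]]]].
    { intros k Hk. apply Huv, Hs, Hk. }
    { intros j k Hj Hk Hjk. apply Hsep; [apply Hs, Hj | apply Hs, Hk |].
      unfold s. destruct (Nat.ltb_spec j k0), (Nat.ltb_spec k k0); lia. }
    destruct (Huv k0 ltac:(lia)) as [Hu0 [Hu0v0 Hv0]].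
    assert (HxN : x N <= u k0).
    { apply Hend; [lra|]. intros k Hk. destruct (Hs k Hk) as [Hsk Hne].
      destruct (Hsep (s k) k0 Hsk ltac:(lia) Hne) as [|Hlt]; [lra|].
      specialize (Hmax (s k) ltac:(lia)). destruct (Huv (s k) Hsk). lra. }
    destruct (partition01_extend f N x (u k0) Hx ltac:(split; lra) HxN)
      as [N1 [x1 [Hx1 [Hend1 Hsum1]]]].
    destruct (partition01_extend f N1 x1 (v k0) Hx1 ltac:(split; lra) ltac:(lra))
      as [N2 [x2 [Hx2 [Hend2 Hsum2]]]].
    exists N2, x2. split; [exact Hx2 | split].
    + intros w _ Hw. rewrite Hend2. apply Hw. lia.
    + rewrite (sumR_skip n k0) by exact Hk0. rewrite Hend1 in Hsum2.
      pose proof (Rabs_pos (f (u k0) - f (x N))). unfold s in Hsum. lra.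
Qed.

Lemma disjoint_intervals_separated (S1 S2 : R -> Prop) u1 v1 u2 v2 :
  is_interval S1 -> is_interval S2 -> (forall y, S1 y -> S2 y -> False) ->
  S1 u1 -> S1 v1 -> S2 u2 -> S2 v2 -> u1 <= v1 -> u2 <= v2 ->
  v1 < u2 \/ v2 < u1.
Proof.
  intros HI1 HI2 Hdisj Hu1 Hv1 Hu2 Hv2 H1 H2.
  destruct (Rlt_dec v1 u2); [left; assumption|].
  destruct (Rlt_dec v2 u1); [right; assumption|].
  exfalso. destruct (Rle_dec u1 u2).
  - apply (Hdisj u2); [apply (HI1 u1 u2 v1) | ]; auto. lra.
  - apply (Hdisj u1); [| apply (HI2 u2 u1 v2)]; auto. lra.
Qed.

Lemma sum_increments_disjoint_intervals_le_Var01 f n (S : nat -> R -> Prop) a b :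
  BV01 f ->
  (forall k y, (k < n)%nat -> S k y -> in01 y) ->
  (forall k, (k < n)%nat -> is_interval (S k)) ->
  (forall j k y, (j < n)%nat -> (k < n)%nat -> j <> k -> S j y -> S k y -> False) ->
  (forall k, (k < n)%nat -> S k (a k) /\ S k (b k)) ->
  sumR n (fun k => Rabs (f (b k) - f (a k))) <= Var01 f.
Proof.
  intros Hf Hin HI Hdisj Hab.
  set (u := fun k => Rmin (a k) (b k)). set (v := fun k => Rmax (a k) (b k)).
  assert (Huv : forall k, (k < n)%nat -> S k (u k) /\ S k (v k) /\ u k <= v k).
  { intros k Hk. destruct (Hab k Hk). unfold u, v, Rmin, Rmax.
    destruct (Rle_dec (a k) (b k)); repeat split; auto; lra. }
  destruct (separated_increments_le_variation_sum f n u v) as [N [x [Hx [_ Hsum]]]].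
  - intros k Hk. destruct (Huv k Hk) as [Hu [Hv Hle]].
    destruct (Hin k _ Hk Hu), (Hin k _ Hk Hv). lra.
  - intros j k Hj Hk Hjk. destruct (Huv j Hj) as [? [? ?]], (Huv k Hk) as [? [? ?]].
    apply (disjoint_intervals_separated (S j) (S k)); auto.
    intros y; apply (Hdisj j k y); auto.
  - eapply Rle_trans; [| apply (variation_sum_le_Var01 f N x Hf Hx)].
    eapply Rle_trans; [| exact Hsum]. right. apply sumR_ext. intros k _.
    unfold u, v, Rmin, Rmax. destruct (Rle_dec (a k) (b k)); [reflexivity|].
    apply Rabs_minus_sym.
Qed.

Lemma birkhoff_add T f m n x :
  birkhoff T f (m + n) x = birkhoff T f m x + birkhoff T f n (iterT T m x).
Proof.
  unfold birkhoff. rewrite sumR_add. f_equal. apply sumR_ext. intros j _.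
  rewrite Nat.add_comm, iterT_add. reflexivity.
Qed.

Definition tower_point (T : R -> R) (Delta : R -> Prop) (q : nat) (x : R) : Prop :=
  exists i y, (i < q)%nat /\ Delta y /\ Delta (iterT T q y) /\ x = iterT T i y.

(* The orbit segment of T^i y of length q, reordered so that its k-th point is
   taken in the level T^k Delta: the last q - i points come first. *)
Definition tower_orbit (T : R -> R) (q i : nat) (y : R) (k : nat) : R :=
  if (k <? i)%nat then iterT T k (iterT T q y) else iterT T k y.

Lemma birkhoff_tower_orbit T f q i y : (i < q)%nat ->
  birkhoff T f q (iterT T i y) = sumR q (fun k => f (tower_orbit T q i y k)).
Proof.
  intros Hi.
  replace (birkhoff T f q (iterT T i y))
    with (birkhoff T f (q - i + i) (iterT T i y)) by (f_equal; lia).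
  replace (sumR q _) with (sumR (i + (q - i)) (fun k => f (tower_orbit T q i y k)))
    by (f_equal; lia).
  rewrite birkhoff_add, sumR_add, Rplus_comm.
  unfold birkhoff. f_equal; apply sumR_ext; intros k Hk; unfold tower_orbit.
  - destruct (Nat.ltb_spec k i); [|lia].
    rewrite <- !iterT_add. f_equal. f_equal. lia.
  - destruct (Nat.ltb_spec (i + k) i); [lia|].
    rewrite <- !iterT_add. f_equal. f_equal. lia.
Qed.

Lemma tower_orbit_in_level T (Delta : R -> Prop) q i y k :
  Delta y -> Delta (iterT T q y) -> imageT T k Delta (tower_orbit T q i y k).
Proof.
  intros Hy Hqy. unfold tower_orbit.
  destruct (k <? i)%nat; [exists (iterT T q y) | exists y]; auto.
Qed.

Lemma birkhoff_tower_points_close T f Delta q x1 x2 :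
  is_IET T -> BV01 f -> rokhlin_tower T Delta q ->
  tower_point T Delta q x1 -> tower_point T Delta q x2 ->
  Rabs (birkhoff T f q x1 - birkhoff T f q x2) <= Var01 f.
Proof.
  intros [_ [HT01 _]] Hf [HD01 [_ [HI Hdisj]]]
    (i1 & y1 & Hi1 & Hy1 & Hqy1 & ->) (i2 & y2 & Hi2 & Hy2 & Hqy2 & ->).
  rewrite (birkhoff_tower_orbit T f q i1 y1 Hi1), (birkhoff_tower_orbit T f q i2 y2 Hi2).
  rewrite <- sumR_minus. eapply Rle_trans; [apply Rabs_sumR_le|].
  apply (sum_increments_disjoint_intervals_le_Var01 f q (fun k => imageT T k Delta)); auto.
  - intros k w _ (y & Hy & ->). apply iterT_in01; auto.
  - intros k _. split; apply tower_orbit_in_level; auto.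
Qed.

Theorem lemma6p2 (T f : R -> R) (Delta : R -> Prop) (q : nat) :
  is_IET T -> BV01 f -> rokhlin_tower T Delta q ->
  exists a : R, forall x : R,
    (exists i y, (i < q)%nat /\ Delta y /\ Delta (iterT T q y) /\
                 Delta (iterT T (2 * q) y) /\ x = iterT T i y) ->
    Rabs (birkhoff T f q x - a) <= Var01 f /\
    Rabs (birkhoff T f (2 * q) x - 2 * a) <= 2 * Var01 f.
Proof.
  intros HT Hf Htower.
  destruct (classic (exists x0, tower_point T Delta q x0)) as [[x0 Hx0]|Hnone].
  - exists (birkhoff T f q x0). intros x (i & y & Hi & Hy & Hqy & H2qy & ->).
    assert (Hx : tower_point T Delta q (iterT T i y)) by (exists i, y; auto).
    assert (Hqx : tower_point T Delta q (iterT T q (iterT T i y))).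
    { exists i, (iterT T q y). rewrite <- !iterT_add.
      replace (q + q)%nat with (2 * q)%nat by lia.
      repeat split; auto. f_equal. lia. }
    pose proof (birkhoff_tower_points_close T f Delta q _ _ HT Hf Htower Hx Hx0) as Hclose.
    pose proof (birkhoff_tower_points_close T f Delta q _ _ HT Hf Htower Hqx Hx0) as Hclose'.
    split; [exact Hclose|].
    replace (2 * q)%nat with (q + q)%nat by lia. rewrite birkhoff_add.
    pose proof (Rabs_triang (birkhoff T f q (iterT T i y) - birkhoff T f q x0)
      (birkhoff T f q (iterT T q (iterT T i y)) - birkhoff T f q x0)) as Htri.
    replace (_ + _ - 2 * _) with
      (birkhoff T f q (iterT T i y) - birkhoff T f q x0 +
       (birkhoff T f q (iterT T q (iterT T i y)) - birkhoff T f q x0)) by ring.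
    lra.
  - exists 0. intros x (i & y & Hi & Hy & Hqy & _ & ->).
    exfalso. apply Hnone. exists (iterT T i y), i, y. auto.
Qed.
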